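(* Let $K$ be a simplicial complex with weight function $w_K\equiv1$, and let $L$ be a subcomplex of $K$ with $S_n(L)=S_n(K)$, equipped with a weight function $w_L$ taking values in $\{0,1\}$. Let $\theta_1\le\theta_2\le\dots$ and $\lambda_1\le\lambda_2\le\dots$ be the eigenvalues of $\mathcal{L}^{up}_n(L,w_L)$ and $\mathcal{L}^{up}_n(K,w_K)$, respectively. Then $\theta_k\le\lambda_k$ for every $k$.
   Context: $S_j(K)$ is the set of $j$-faces; $C^j(K,\mathbb{R})$ the real cochains on oriented $j$-faces, coboundary $(\delta_j f)([v_0,\dots,v_{j+1}])=\sum_i(-1)^if([v_0,\dots,\hat v_i,\dots,v_{j+1}])$. For a weight function $w\ge0$ on faces, $(f,g)=\sum_{F\in S_j}w(F)f([F])g([F])$ and the formal adjoint is $(\delta_j^*\bar f)([F])=\sum_{\bar F\in S_{j+1},\bar F\supset F}\frac{w(\bar F)}{w(F)}\mathrm{sgn}([F],\partial[\bar F])\bar f([\bar F])$ if $w(F)\ne0$, and $0$ if $w(F)=0$, where $\mathrm{sgn}([v_0,..,\hat v_i,..,v_{j+1}],\partial[v_0,..,v_{j+1}])=(-1)^i$. The up-Laplacian is $\mathcal{L}^{up}_n(K,w)=\delta_n^*\delta_n$ on $C^n$; with $w\equiv1$ it is the combinatorial up-Laplacian. Both Laplacians act on $n$-cochains of spaces of the same dimension $|S_n(K)|$. *)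

From HB Require Import structures.
From mathcomp Require Import all_boot all_order all_algebra.
From mathcomp Require Import reals.
Set Implicit Arguments. Unset Strict Implicit. Unset Printing Implicit Defensive.
Import Order.TTheory GRing.Theory Num.Theory.
Local Open Scope ring_scope.

(* Vertices are 'I_N; the natural order on vertices fixes the canonical
   orientation [v_0,...,v_j] (v_0 < ... < v_j) of every face.  A cochain is
   represented by its values on canonically oriented faces. *)

Section Simplicial.
Variable N : nat.
Notation face := {set 'I_N}.

Definition is_complex (K : {set face}) : Prop :=
  set0 \notin K /\
  forall F G : face, F \in K -> G \subset F -> G != set0 -> G \in K.

Definition faces (K : {set face}) (j : nat) : {set face} :=
  [set F in K | #|F| == j.+1].

Variable R : realType.

(* sgn([Fb \ v], d[Fb]) = (-1)^i where v is the i-th vertex of Fb *)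
Definition bsign (Fb : face) (v : 'I_N) : R :=
  (-1) ^+ #|[set u in Fb | (val u < val v)%N]|.

Definition coboundary (f : face -> R) (Fb : face) : R :=
  \sum_(v in Fb) bsign Fb v * f (Fb :\ v).

(* weighted up-Laplacian  delta_n^* delta_n  on C^n(K) *)
Definition up_lap (K : {set face}) (w : face -> R) (n : nat)
    (f : face -> R) (F : face) : R :=
  if w F == 0 then 0 else
  \sum_(Fb in faces K n.+1)
    \sum_(v in Fb | Fb :\ v == F) (w Fb / w F) * bsign Fb v * coboundary f Fb.

Definition up_lap_mx (K : {set face}) (w : face -> R) (n : nat)
    : 'M[R]_#|faces K n| :=
  \matrix_(i, j) up_lap K w n
     (fun G => if G == enum_val j then 1 else 0) (enum_val i).

End Simplicial.

Definition eigen_seq (R : realType) (m : nat) (A : 'M[R]_m) (s : seq R) : Prop :=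
  sorted <=%R s /\ char_poly A = \prod_(x <- s) ('X - x%:P).

From HB Require Import structures.
From mathcomp Require Import all_boot all_order all_algebra.
From mathcomp Require Import reals zify complex.
Set Implicit Arguments. Unset Strict Implicit. Unset Printing Implicit Defensive.
Import Order.TTheory GRing.Theory Num.Theory.
Local Open Scope ring_scope.

(* Let B be the coboundary matrix of K from n- to (n+1)-cochains.  The
   up-Laplacian of K is B^T B and, as L has the same n-faces, that of (L, w_L)
   is D B^T W B, with D and W the 0/1 diagonal matrices of w_L on n-faces and
   on (n+1)-faces (0 outside L).  Since D is idempotent, D B^T W B has the
   characteristic polynomial of the hermitian P = D B^T W B D.  For t >= 0,
   the eigenvectors of P with eigenvalue > t are fixed by D, so on their span
   the form of P is that of B^T W B, hence at most that of B^T B.  That span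
   meets the eigenvectors of B^T B with eigenvalue <= t only in 0, whence
   #{k | lambda_k <= t} <= #{k | theta_k <= t} for all t, i.e. theta_k <=
   lambda_k. *)

Section CharPoly.
Variable F : fieldType.

Lemma char_poly_mx_mulmx m (A B : 'M[F]_m) :
  char_poly_mx A *m char_poly_mx B =
  'X *: ('X%:M - map_mx polyC (A + B)) + map_mx polyC (A *m B).
Proof.
rewrite /char_poly_mx mulmxBl !mulmxBr !mul_scalar_mx mul_mx_scalar.
rewrite -map_mxM map_mxD !scalerBr scalerDr scale_scalar_mx.
by rewrite opprB addrA opprD addrA [LHS]addrAC [X in X + _ = _]addrAC.
Qed.

Lemma char_polyM_mulmx0 m (A B : 'M[F]_m) : A *m B = 0 ->
  char_poly A * char_poly B = 'X^m * char_poly (A + B).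
Proof.
move=> AB0; rewrite /char_poly -det_mulmx char_poly_mx_mulmx AB0.
by rewrite (map_mx0 (@polyC F)) addr0 detZ.
Qed.

Lemma char_poly0 m : char_poly (0 : 'M[F]_m) = 'X^m.
Proof. by rewrite /char_poly /char_poly_mx (map_mx0 (@polyC F)) subr0 det_scalar. Qed.

Lemma char_poly_sqr0 m (N : 'M[F]_m) : N *m N = 0 -> char_poly N = 'X^m.
Proof.
move=> NN; have NN' : N *m - N = 0 by rewrite mulmxN NN oppr0.
have := char_polyM_mulmx0 NN'; rewrite subrr char_poly0 -exprD => H.
have : char_poly N %| ('X - 0%:P) ^+ (m + m) by rewrite subr0 -H dvdp_mulr.
case/dvdp_exp_XsubCP => k _; rewrite subr0.
rewrite eqp_monic ?char_poly_monic ?monicXn // => /eqP Ek.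
have /eqP : size (char_poly N) = size ('X^k : {poly F}) by rewrite Ek.
by rewrite size_char_poly size_polyXn eqSS => /eqP km; rewrite Ek -km.
Qed.

Lemma char_poly_add_sqr0 m (N T : 'M[F]_m) : N *m N = 0 -> N *m T = 0 ->
  char_poly (N + T) = char_poly T.
Proof.
move=> NN NT; have := char_polyM_mulmx0 NT; rewrite char_poly_sqr0 // => H.
by apply: (@mulfI _ 'X^m); rewrite ?monic_neq0 ?monicXn // H.
Qed.

Lemma char_poly_idem_mulmx m (D S : 'M[F]_m) : D *m D = D ->
  char_poly (D *m S) = char_poly (D *m S *m D).
Proof.
move=> DD; set N := D *m S *m (1%:M - D).
have N_D : N *m D = 0 by rewrite -mulmxA mulmxBl DD mul1mx subrr mulmx0.
have DS_split : D *m S = N + D *m S *m D by rewrite -mulmxDr subrK mulmx1.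
rewrite {1}DS_split.
by apply: char_poly_add_sqr0; rewrite [in X in X = 0]/N !mulmxA N_D !mul0mx.
Qed.
Lemma char_poly_similar m (V U B : 'M[F]_m) :
  V *m U = 1%:M -> char_poly (V *m B *m U) = char_poly B.
Proof.
move=> VU; rewrite /char_poly.
have -> : char_poly_mx (V *m B *m U) =
    map_mx polyC V *m char_poly_mx B *m map_mx polyC U.
  rewrite /char_poly_mx mulmxBr mulmxBl -!map_mxM.
  rewrite mul_mx_scalar -scalemxAl -map_mxM VU.
  by rewrite (map_scalar_mx polyC) scale_scalar_mx mulr1.
rewrite !det_mulmx mulrAC -det_mulmx -map_mxM VU.
by rewrite (map_scalar_mx polyC) det_scalar expr1n mul1r.
Qed.

End CharPoly.

Section Hermitian.
Local Open Scope sesquilinear_scope.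
Variable C : numClosedFieldType.
Local Notation "''[' u ]" := (dotmx u u) : ring_scope.

Definition qform m (A : 'M[C]_m) (x : 'rV[C]_m) : C := (x *m A *m x^t*) 0 0.

Lemma adjmxM m n p (X : 'M[C]_(m, n)) (Y : 'M[C]_(n, p)) :
  (X *m Y)^t* = Y^t* *m X^t*.
Proof. by rewrite trmx_mul map_mxM. Qed.

Lemma dnormE m (x : 'rV[C]_m) : '[x] = \sum_i x 0 i * (x 0 i)^*.
Proof. by rewrite dotmxE mxE; apply: eq_bigr => i _; rewrite !mxE. Qed.

Lemma qformD m (A B : 'M[C]_m) x : qform (A + B) x = qform A x + qform B x.
Proof. by rewrite /qform mulmxDr mulmxDl mxE. Qed.

Lemma qform_gram m p (G : 'M[C]_(p, m)) x : qform (G^t* *m G) x = '[x *m G^t*].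
Proof. by rewrite /qform dotmxE adjmxM trmxCK !mulmxA. Qed.

Lemma qform_diag m (e c : 'rV[C]_m) :
  qform (diag_mx e) c = \sum_i e 0 i * (c 0 i * (c 0 i)^*).
Proof.
rewrite /qform mul_mx_diag mxE; apply: eq_bigr => i _.
by rewrite !mxE mulrCA mulrA.
Qed.

Section OrthonormalRows.
Variables (p m : nat) (V : 'M[C]_(p, m)).
Hypothesis V_orthonormal : V *m V^t* = 1%:M.

Lemma dnorm_orthonormal_rows (c : 'rV[C]_p) : '[c *m V] = '[c].
Proof. by rewrite !dotmxE adjmxM -!mulmxA (mulmxA V) V_orthonormal mul1mx. Qed.

Lemma qform_eigen_rows (A : 'M[C]_m) (e c : 'rV[C]_p) :
  V *m A = diag_mx e *m V ->
  qform A (c *m V) = \sum_i e 0 i * (c 0 i * (c 0 i)^*).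
Proof.
move=> VA; rewrite /qform adjmxM -!mulmxA (mulmxA V) VA -!mulmxA.
by rewrite (mulmxA V) V_orthonormal mul1mx mulmxA -qform_diag.
Qed.

End OrthonormalRows.

Lemma eigen_rows_fixed p m (V : 'M[C]_(p, m)) (A D : 'M[C]_m) (e : 'rV[C]_p) :
  V *m A = diag_mx e *m V -> A *m D = A -> (forall i, e 0 i != 0) ->
  V *m D = V.
Proof.
move=> VA AD e_neq0.
have : diag_mx e *m (V *m D) = diag_mx e *m V by rewrite mulmxA -VA -mulmxA AD.
rewrite !mul_diag_mx => /matrixP eqV; apply/matrixP => i j.
by have := eqV i j; rewrite !mxE; apply: mulfI.
Qed.

Lemma adj_hermsymmx m (A : 'M[C]_m) : A^t* = A -> A \is hermsymmx.
Proof. by move=> hA; apply/is_hermitianmxP; rewrite expr0 scale1r hA. Qed.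

Definition eigen_rows m (A : 'M[C]_m) (S : {set 'I_m}) : 'M[C]_(#|S|, m) :=
  rowsub (fun i : 'I_#|S| => enum_val i) (spectralmx A).

Section Spectrum.
Variables (m : nat) (A : 'M[C]_m).
Hypothesis A_herm : A^t* = A.
Local Notation U := (spectralmx A).
Local Notation d := (spectral_diag A).

Lemma spectralmx_orthonormal : U *m U^t* = 1%:M.
Proof. exact/unitarymxP/spectral_unitarymx. Qed.

Lemma spectralmx_mulmx : U *m A = diag_mx d *m U.
Proof.
have /orthomx_spectralP A_eq := hermitian_normalmx (adj_hermsymmx A_herm).
by rewrite [X in _ *m X = _]A_eq !mulmxA mulmxV ?mul1mx ?spectral_unit.
Qed.

Lemma spectral_diag_real i : d 0 i \is Num.real.
Proof. exact/mxOverP/hermitian_spectral_diag_real/adj_hermsymmx. Qed.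

Lemma char_poly_spectral : char_poly A = \prod_(i < m) ('X - (d 0 i)%:P).
Proof.
have /orthomx_spectralP A_eq := hermitian_normalmx (adj_hermsymmx A_herm).
rewrite [X in char_poly X]A_eq char_poly_similar ?mulVmx ?spectral_unit //.
rewrite char_poly_trig ?diag_mx_is_trig //.
by apply: eq_bigr => i _; rewrite mxE eqxx mulr1n.
Qed.

Section Eigenvalues.
Variable s : seq C.
Hypothesis s_eig : char_poly A = \prod_(x <- s) ('X - x%:P).

Lemma perm_eq_spectral_diag : perm_eq s [seq d 0 i | i <- enum 'I_m].
Proof.
apply: prod_XsubC_eq; rewrite -s_eig char_poly_spectral big_map big_enum /=.
by apply: eq_bigl => i; rewrite inE.
Qed.

Lemma card_spectral_diag (P : pred C) : #|[set i | P (d 0 i)]| = count P s.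
Proof.
rewrite (permP perm_eq_spectral_diag) count_map cardsE cardE /enum_mem.
by rewrite size_filter count_filter; apply: eq_count => i; rewrite /= andbT.
Qed.
End Eigenvalues.

Section EigenRows.
Variable S : {set 'I_m}.

Lemma eigen_rows_orthonormal : eigen_rows A S *m (eigen_rows A S)^t* = 1%:M.
Proof.
apply/matrixP => i j; rewrite !mxE.
transitivity ((U *m U^t*) (enum_val i) (enum_val j)).
  by rewrite mxE; apply: eq_bigr => k _; rewrite !mxE.
by rewrite spectralmx_orthonormal !mxE (inj_eq enum_val_inj).
Qed.

Lemma rank_eigen_rows : \rank (eigen_rows A S) = #|S|.
Proof. exact/mxrank_unitary/unitarymxP/eigen_rows_orthonormal. Qed.

Lemma eigen_rows_mulmx :
  eigen_rows A S *m A = diag_mx (\row_i d 0 (enum_val i)) *m eigen_rows A S.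
Proof.
rewrite mul_rowsub_mx spectralmx_mulmx !mul_diag_mx.
by apply/matrixP => i j; rewrite !mxE.
Qed.

Lemma qform_eigen_rows_spectral (c : 'rV[C]_#|S|) :
  qform A (c *m eigen_rows A S) =
  \sum_i d 0 (enum_val i) * (c 0 i * (c 0 i)^*).
Proof.
rewrite (qform_eigen_rows eigen_rows_orthonormal _ eigen_rows_mulmx).
by apply: eq_bigr => i _; rewrite mxE.
Qed.
End EigenRows.

Lemma qform_eigen_rows_le t (x : 'rV[C]_m) (S : {set 'I_m}) :
  {in S, forall i, d 0 i <= t} -> (x <= eigen_rows A S)%MS ->
  qform A x <= t * '[x].
Proof.
move=> S_le /submxP[c ->]; rewrite qform_eigen_rows_spectral.
rewrite dnorm_orthonormal_rows ?eigen_rows_orthonormal // dnormE mulr_sumr.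
apply: ler_sum => i _; rewrite ler_wpM2r ?mul_conjC_ge0 //.
exact/S_le/enum_valP.
Qed.

Lemma qform_eigen_rows_gt t (x : 'rV[C]_m) (S : {set 'I_m}) :
  {in S, forall i, t < d 0 i} -> (x <= eigen_rows A S)%MS -> x != 0 ->
  t * '[x] < qform A x.
Proof.
move=> S_gt /submxP[c ->]; rewrite qform_eigen_rows_spectral.
rewrite dnorm_orthonormal_rows ?eigen_rows_orthonormal // dnormE mulr_sumr.
rewrite -subr_gt0 -sumrB => cU_neq0.
have /existsP[i ci_neq0] : [exists i, c 0 i != 0].
  apply: contraNT cU_neq0; rewrite negb_exists => /forallP c0.
  by apply/eqP; rewrite (_ : c = 0) ?mul0mx //; apply/rowP => i; rewrite mxE; apply/eqP/negPn.
have term_ge0 j : 0 <= d 0 (enum_val j) * (c 0 j * (c 0 j)^*) - t * (c 0 j * (c 0 j)^*).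
  by rewrite -mulrBl mulr_ge0 ?mul_conjC_ge0 // subr_ge0 ltW // S_gt ?enum_valP.
rewrite (bigD1 i) //= ltr_wpDr ?sumr_ge0 // -mulrBl mulr_gt0 ?mul_conjC_gt0 //.
by rewrite subr_gt0 S_gt ?enum_valP.
Qed.
End Spectrum.

Lemma card_spectral_le m (P Q : 'M[C]_m) (t : C) :
  P^t* = P -> Q^t* = Q -> t \is Num.real ->
  (forall x, (x <= eigen_rows P [set i | (t < spectral_diag P 0 i)%R])%MS ->
     qform P x <= qform Q x) ->
  (#|[set i | (spectral_diag Q 0 i <= t)%R]| <=
   #|[set i | (spectral_diag P 0 i <= t)%R]|)%N.
Proof.
move=> P_herm Q_herm t_real PQ.
set lowQ := [set i | spectral_diag Q 0 i <= t].
set highP := [set i | t < spectral_diag P 0 i].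
have lowQ_le : {in lowQ, forall i, spectral_diag Q 0 i <= t} by move=> i; rewrite inE.
have highP_gt : {in highP, forall i, t < spectral_diag P 0 i} by move=> i; rewrite inE.
have cap0 : (eigen_rows Q lowQ :&: eigen_rows P highP)%MS = 0.
  apply/eqP/rowV0P => x; rewrite sub_capmx => /andP[xQ xP].
  apply/eqP; apply: contraTT (qform_eigen_rows_le Q_herm lowQ_le xQ) => x_neq0.
  by rewrite lt_geF // (lt_le_trans (qform_eigen_rows_gt P_herm highP_gt xP x_neq0)) ?PQ.
have := rank_leq_col (eigen_rows Q lowQ + eigen_rows P highP)%MS.
rewrite mxrank_disjoint_sum // !rank_eigen_rows.
have card_split : (#|highP| + #|[set i | (spectral_diag P 0 i <= t)%R]| = m)%N.
  rewrite -[RHS]card_ord -(cardsC highP); congr (_ + _)%N; apply: eq_card => i.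
  by rewrite !inE real_ltNge ?negbK ?spectral_diag_real.
by move=> le_m; rewrite -(leq_add2r #|highP|) [X in (_ <= X)%N]addnC card_split.
Qed.

Lemma spectral_diag_gram_ge0 m p (G : 'M[C]_(p, m)) i :
  0 <= spectral_diag (G^t* *m G) 0 i.
Proof.
have Q_herm : (G^t* *m G)^t* = G^t* *m G by rewrite adjmxM trmxCK.
have := qform_eigen_rows (spectralmx_orthonormal _) (delta_mx 0 i)
  (spectralmx_mulmx Q_herm).
rewrite qform_gram (bigD1 i) //= big1 ?addr0 => [|j ji]; last first.
  by rewrite mxE (negPf ji) andbF mul0r mulr0.
by rewrite mxE !eqxx conjC1 !mulr1 => <-; apply: dnorm_ge0.
Qed.

Definition binary_row m (e : 'rV[C]_m) := forall i, e 0 i = 0 \/ e 0 i = 1.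

Lemma diag_binary_idem m (e : 'rV[C]_m) : binary_row e ->
  diag_mx e *m diag_mx e = diag_mx e.
Proof.
move=> e01; rewrite mul_diag_mx; apply/matrixP => i j; rewrite !mxE.
have [->|_] := eqVneq i j; last by rewrite !mulr0n mulr0.
by rewrite !mulr1n; case: (e01 j) => ->; rewrite ?mul0r ?mul1r.
Qed.

Lemma diag_binary_adj m (e : 'rV[C]_m) : binary_row e -> (diag_mx e)^t* = diag_mx e.
Proof.
move=> e01; apply/matrixP => i j; rewrite !mxE.
have [<-|_] := eqVneq i j; last by rewrite !mulr0n conjC0.
by rewrite !mulr1n; case: (e01 i) => ->; rewrite ?conjC0 ?conjC1.
Qed.

Lemma qform_compress m (D S : 'M[C]_m) (x : 'rV[C]_m) :
  D^t* = D -> x *m D = x -> qform (D *m S *m D) x = qform S x.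
Proof.
move=> D_herm xD; have Dx : D *m x^t* = x^t* by rewrite -[D]D_herm -adjmxM xD.
rewrite /qform (mulmxA x (D *m S) D) (mulmxA x D S) xD.
by rewrite -(mulmxA (x *m S) D) Dx.
Qed.

Lemma qform_masked_gram_le m p (ww : 'rV[C]_p) (B : 'M[C]_(p, m)) x :
  binary_row ww -> qform (B^t* *m diag_mx ww *m B) x <= qform (B^t* *m B) x.
Proof.
move=> ww01; set W' := diag_mx (\row_b (1 - ww 0 b)).
have ww'01 : binary_row (\row_b (1 - ww 0 b)).
  by move=> b; rewrite mxE; case: (ww01 b) => ->; rewrite ?subr0 ?subrr; auto.
have -> : B^t* *m B = B^t* *m diag_mx ww *m B + (W' *m B)^t* *m (W' *m B).
  rewrite adjmxM diag_binary_adj // mulmxA -(mulmxA _ _ W') diag_binary_idem //.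
  rewrite -!mulmxA -mulmxDr -mulmxDl.
  suff -> : diag_mx ww + W' = 1%:M by rewrite mul1mx.
  by apply/matrixP => i j; rewrite !mxE -mulrnDl addrC subrK.
by rewrite qformD qform_gram lerDl dnorm_ge0.
Qed.

Lemma count_spectrum_masked_gram_le m p (dd : 'rV[C]_m) (ww : 'rV[C]_p)
    (B : 'M[C]_(p, m)) (s u : seq C) (t : C) :
  binary_row dd -> binary_row ww -> t \is Num.real ->
  char_poly (diag_mx dd *m B^t* *m diag_mx ww *m B) = \prod_(x <- s) ('X - x%:P) ->
  char_poly (B^t* *m B) = \prod_(x <- u) ('X - x%:P) ->
  (count (fun x => (x <= t)%R) u <= count (fun x => (x <= t)%R) s)%N.
Proof.
move=> dd01 ww01 t_real s_eig u_eig.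
set D := diag_mx dd; set S := B^t* *m diag_mx ww *m B.
set P := D *m S *m D; set Q := B^t* *m B.
have D_herm : D^t* = D by apply: diag_binary_adj.
have S_herm : S^t* = S by rewrite !adjmxM trmxCK diag_binary_adj // mulmxA.
have P_herm : P^t* = P by rewrite [P^t*]adjmxM [(D *m S)^t*]adjmxM S_herm D_herm mulmxA.
have Q_herm : Q^t* = Q by rewrite adjmxM trmxCK.
have P_eig : char_poly P = \prod_(x <- s) ('X - x%:P).
  by rewrite -char_poly_idem_mulmx ?diag_binary_idem // -s_eig !mulmxA.
rewrite -(card_spectral_diag Q_herm u_eig) -(card_spectral_diag P_herm P_eig).
have [t_lt0|t_ge0] := real_ltP t_real (real0 C).
  rewrite (_ : [set i | _] = set0) ?cards0 //; apply/setP => i.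
  by rewrite !inE lt_geF // (lt_le_trans t_lt0) ?spectral_diag_gram_ge0.
apply: card_spectral_le => // _ /submxP[c ->]; set V := eigen_rows _ _.
have VD : V *m D = V.
  apply: eigen_rows_fixed (eigen_rows_mulmx P_herm _) _ _.
    by rewrite -mulmxA diag_binary_idem.
  move=> i; rewrite mxE; have := enum_valP i; rewrite inE.
  by move/(le_lt_trans t_ge0); rewrite lt0r => /andP[].
by rewrite qform_compress ?qform_masked_gram_le // -mulmxA VD.
Qed.
End Hermitian.

Lemma sorted_nth_le_of_count_le (R : realDomainType) (s u : seq R) :
  sorted <=%R s -> sorted <=%R u ->
  (forall t, (count (fun x => (x <= t)%R) u <= count (fun x => (x <= t)%R) s)%N) ->
  forall k, (k < size u)%N -> s`_k <= u`_k.
Proof.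
move=> s_sorted u_sorted count_le k k_lt; rewrite leNgt; apply/negP => uk_lt_sk.
pose P x := (x <= u`_k)%R.
have u_head : (k.+1 <= count P u)%N.
  rewrite -[u](cat_take_drop k.+1) count_cat.
  suff -> : count P (take k.+1 u) = k.+1 by rewrite leq_addr.
  rewrite -[RHS](size_takel k_lt); apply/eqP; rewrite -all_count.
  apply/(all_nthP 0) => j; rewrite size_takel // => j_le_k; rewrite nth_take //.
  by rewrite /P; apply: (le_sorted_leq_nth 0 u_sorted); rewrite ?inE /=; lia.
have s_head : (count P s <= k)%N.
  rewrite -[s](cat_take_drop k) count_cat.
  have -> : count P (drop k s) = 0%N.
    apply/eqP; rewrite -leqn0 leqNgt -has_count; apply/hasPn => x.
    case/(nthP 0) => j; rewrite size_drop ltn_subRL nth_drop => j_lt <-.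
    rewrite /P -ltNge; apply: lt_le_trans uk_lt_sk _.
    (* restated so that lia sees the same [size s] atom as in the goals *)
    have {}j_lt : (k + j < size s)%N := j_lt.
    by apply: (le_sorted_leq_nth 0 s_sorted); rewrite ?inE /=; lia.
  by rewrite addn0 (leq_trans (count_size _ _)) // size_take_min geq_minl.
by have := count_le u`_k; rewrite -/P leqNgt (leq_ltn_trans s_head u_head).
Qed.

Section CoboundaryMatrix.
Variables (R : realType) (N : nat).
Notation face := {set 'I_N}.

Definition face_indicator (G : face) : face -> R :=
  fun H => if H == G then 1 else 0.

(* The index set [S] is a parameter so that [#|faces L n|] can be rewritten
   into [#|faces K n|] in the type of the matrix. *)
Definition up_lap_mx_on (S K : {set face}) (w : face -> R) (n : nat)
    : 'M[R]_#|S| :=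
  \matrix_(i, j) up_lap K w n (face_indicator (enum_val j)) (enum_val i).

Lemma up_lap_mxE K w n : up_lap_mx K w n = up_lap_mx_on (faces K n) K w n.
Proof. by []. Qed.

Definition coboundary_mx (K : {set face}) (n : nat)
    : 'M[R]_(#|faces K n.+1|, #|faces K n|) :=
  \matrix_(b, j) coboundary (face_indicator (enum_val j)) (enum_val b).

Lemma coboundary_indicator Fb G :
  coboundary (face_indicator G) Fb = \sum_(v in Fb | Fb :\ v == G) bsign R Fb v.
Proof.
rewrite /coboundary big_mkcondr /=; apply: eq_bigr => v _.
by rewrite /face_indicator; case: ifP; rewrite ?mulr1 ?mulr0.
Qed.

Lemma sum_bsign_facet (a c : R) (Fb F : face) :
  \sum_(v in Fb | Fb :\ v == F) a * bsign R Fb v * c =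
  a * coboundary (face_indicator F) Fb * c.
Proof. by rewrite coboundary_indicator mulr_sumr mulr_suml. Qed.

Lemma up_lap_mx_unweighted K n :
  up_lap_mx K (fun _ => 1) n = (coboundary_mx K n)^T *m coboundary_mx K n.
Proof.
apply/matrixP => i j; rewrite !mxE /up_lap oner_eq0 /= big_enum_val.
by apply: eq_bigr => b _; rewrite sum_bsign_facet divr1 mul1r !mxE.
Qed.

Lemma up_lap_mx_subcomplex (K L : {set face}) (wL : face -> R) n :
  L \subset K -> faces L n = faces K n ->
  (forall F, F \in L -> wL F = 0 \/ wL F = 1) ->
  up_lap_mx_on (faces K n) L wL n =
  diag_mx (\row_i wL (enum_val i)) *m (coboundary_mx K n)^T *m
  diag_mx (\row_b (if enum_val b \in L then wL (enum_val b) else 0)) *m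
  coboundary_mx K n.
Proof.
move=> LK faces_eq w01; rewrite mul_diag_mx mul_mx_diag; apply/matrixP => i j.
rewrite !mxE /up_lap; under [RHS]eq_bigr => b _ do rewrite !mxE.
have faces_in_L F : F \in faces K n -> F \in L by rewrite -faces_eq inE => /andP[].
case/w01: (faces_in_L _ (enum_valP i)) => ->; rewrite ?eqxx; first by rewrite big1 // => b _; rewrite !mul0r.
rewrite oner_eq0 /=.
transitivity (\sum_(Fb in faces K n.+1)
  (if Fb \in L then wL Fb * coboundary (face_indicator (enum_val i)) Fb *
       coboundary (face_indicator (enum_val j)) Fb else 0)).
  rewrite -big_mkcondr /=.
  apply: eq_big => [Fb|Fb _]; last by rewrite sum_bsign_facet divr1.
  rewrite !inE; case FbL: (Fb \in L); rewrite ?andbF ?andbT //.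
  by rewrite (subsetP LK _ FbL).
rewrite big_enum_val; apply: eq_bigr => b _.
by case: ifP; rewrite ?mulr0 ?mul0r // mul1r (mulrC (wL _)).
Qed.
End CoboundaryMatrix.

Section RealToComplex.
Local Open Scope sesquilinear_scope.
Variable R : realType.
Local Notation toC := (real_complex R).

Lemma real_complex_real (x : R) : toC x \is Num.real.
Proof. by rewrite realE -[0]/((0 : R)%:C)%C !lecR le_total. Qed.

Lemma adj_map_real_complex p m (B : 'M[R]_(p, m)) : (map_mx toC B)^t* = map_mx toC B^T.
Proof. by apply/matrixP => i j; rewrite !mxE conj_Creal ?real_complex_real. Qed.

Lemma binary_row_real_complex m (e : 'rV[R]_m) :
  (forall i, e 0 i = 0 \/ e 0 i = 1) -> binary_row (map_mx toC e).
Proof. by move=> e01 i; rewrite mxE; case: (e01 i) => ->; [left|right]; rewrite ?rmorph0 ?rmorph1. Qed.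

Lemma char_poly_real_complex m (M : 'M[R]_m) (s : seq R) :
  char_poly M = \prod_(x <- s) ('X - x%:P) ->
  char_poly (map_mx toC M) = \prod_(x <- map toC s) ('X - x%:P).
Proof. by move=> M_eig; rewrite -map_char_poly M_eig map_prod_XsubC big_map. Qed.

Lemma count_le_real_complex (s : seq R) (t : R) :
  count (fun x => (x <= toC t)%R) (map toC s) = count (fun x => (x <= t)%R) s.
Proof. by rewrite count_map; apply: eq_count => x /=; rewrite lecR. Qed.
End RealToComplex.

Theorem corollary2p16 (R : realType) (N n : nat)
    (K L : {set {set 'I_N}}) (wL : {set 'I_N} -> R)
    (theta lambda : seq R) :
  is_complex K -> is_complex L -> L \subset K ->
  faces L n = faces K n ->
  (forall F, F \in L -> wL F = 0 \/ wL F = 1) ->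
  eigen_seq (up_lap_mx L wL n) theta ->
  eigen_seq (up_lap_mx K (fun _ => 1) n) lambda ->
  forall k : nat, (k < size lambda)%N -> theta`_k <= lambda`_k.
Proof.
move=> _ _ LK faces_eq w01 [theta_sorted theta_eig] [lambda_sorted lambda_eig].
have faces_in_L F : F \in faces K n -> F \in L by rewrite -faces_eq inE => /andP[].
apply: sorted_nth_le_of_count_le => // t.
rewrite up_lap_mx_unweighted in lambda_eig.
rewrite up_lap_mxE faces_eq (up_lap_mx_subcomplex LK faces_eq w01) in theta_eig.
have theta_eigC := char_poly_real_complex theta_eig.
have lambda_eigC := char_poly_real_complex lambda_eig.
rewrite !map_mxM !map_diag_mx -adj_map_real_complex in theta_eigC.
rewrite map_mxM -adj_map_real_complex in lambda_eigC.
rewrite -!(count_le_real_complex _ t).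
apply: (count_spectrum_masked_gram_le _ _ (real_complex_real t) theta_eigC lambda_eigC).
- apply: binary_row_real_complex => i; rewrite mxE; apply/w01/faces_in_L/enum_valP.
- apply: binary_row_real_complex => b; rewrite mxE.
  by case: ifP => [/w01 //|_]; left.
Qed.
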